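(* Let $H'$ be the $3$-graph with vertex set $\{1,\dots,6\}$ and edge set $\{123,124,345,346,561,562,135,146,236,245\}$. A blow-up of $H'$ is a $3$-graph obtained by replacing each vertex $i$ of $H'$ by a set $V_i$ (the $V_i$ pairwise disjoint), where a triple of vertices is an edge if and only if its three vertices lie in three distinct sets $V_{i},V_{j},V_{k}$ with $ijk\in E(H')$. Then every blow-up of $H'$ on $n$ vertices has a coclique of size at least $n/2$, and of size strictly greater than $n/2$ if $n\not\equiv 0 \pmod 6$; moreover, when all $V_i$ have equal size $n/6$, the largest coclique has size exactly $n/2$.
   Context: A $3$-graph is a $3$-uniform hypergraph; $ijk$ denotes the triple $\{i,j,k\}$; a coclique is a set of vertices containing no edge. *)

From mathcomp Require Import all_boot.
Set Implicit Arguments. Unset Strict Implicit. Unset Printing Implicit Defensive.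

(* Vertices 1..6 of H' are encoded as 0..5 in 'I_6 (vertex i ↦ i-1). *)
Definition v (k : nat) : 'I_6 := inord k.

Definition H'edges : {set {set 'I_6}} :=
  [set [set v 0; v 1; v 2]; [set v 0; v 1; v 3];
       [set v 2; v 3; v 4]; [set v 2; v 3; v 5];
       [set v 4; v 5; v 0]; [set v 4; v 5; v 1];
       [set v 0; v 2; v 4]; [set v 0; v 3; v 5];
       [set v 1; v 2; v 5]; [set v 1; v 3; v 4]].

(* A blow-up of H' : vertex set T, with f x = i meaning x ∈ V_i (the V_i are
   the fibres of f, hence pairwise disjoint; they may be empty). *)
Definition blowup_edge (T : finType) (f : T -> 'I_6) (x y z : T) : bool :=
  [&& f x != f y, f y != f z, f x != f z & [set f x; f y; f z] \in H'edges].

Definition coclique (T : finType) (f : T -> 'I_6) (S : {set T}) : Prop :=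
  forall x y z, x \in S -> y \in S -> z \in S -> ~~ blowup_edge f x y z.

From mathcomp Require Import all_boot.
From mathcomp Require Import zify.
Set Implicit Arguments. Unset Strict Implicit. Unset Printing Implicit Defensive.

(* Write V_i for the class of vertex i of H' and w_i for
   its size, so that n = w_1 + ... + w_6.  A set C of vertices of H' that
   contains no edge of H' pulls back to a coclique of the blow-up of size
   sum_(i in C) w_i; conversely, the image of a coclique contains no edge.
   H' has exactly ten edge-free triples (the complement of its edge set among
   the 20 triples), and every vertex lies in exactly five of them.  Double
   counting gives sum over these triples of 2 * weight = 10 n, so some triple
   has weight >= n/2.  If none has weight > n/2, all ten have weight exactly
   n/2, and comparing triples that differ in one vertex forces all w_i to be
   equal, i.e. 6 | n.  Finally every edge-free set has at most three vertices,
   so in the balanced case w_i = n/6 no coclique exceeds 3 * n/6 = n/2.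
   The file first proves two summation lemmas, then the finite facts about
   H' (edges, non-edges, double counting), then the transfer between a
   blow-up and H', and derives the theorem from the resulting dichotomy:
   either some non-edge gives a coclique larger than n/2, or the blow-up is
   balanced. *)

Lemma sum_le_all_eq (I : eqType) (r : seq I) (F G : I -> nat) :
  {in r, forall i, F i <= G i} -> \sum_(i <- r) G i <= \sum_(i <- r) F i ->
  {in r, forall i, F i = G i}.
Proof.
elim: r => [|a r IHr] // FleG; rewrite !big_cons => sumGF.
have FleG_r : {in r, forall i, F i <= G i}.
  by move=> i ri; apply: FleG; rewrite inE ri orbT.
have Fa := FleG a (mem_head a r).
have sumF_r : \sum_(i <- r) F i <= \sum_(i <- r) G i.
  by rewrite !big_seq; apply: leq_sum.
move=> i; rewrite inE => /predU1P[-> | ri]; first by lia.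
by apply: IHr => //; lia.
Qed.

Lemma sum_set3 (I : finType) (F : I -> nat) (a b c : I) :
  a != b -> a != c -> b != c -> \sum_(i in [set a; b; c]) F i = F a + F b + F c.
Proof.
move=> ab ac bc; rewrite setUC big_setU1 /=; last first.
  by rewrite !inE negb_or ![c == _]eq_sym ac bc.
have b_notin : b \notin [set a] by rewrite inE eq_sym.
by rewrite setUC big_setU1 // big_set1 /= addnC [F b + _]addnC.
Qed.

(* [v k] is defined through [inord] and does not reduce; rewriting it to a
   literal ordinal lets membership tests on explicit sets evaluate. *)
Lemma vE k (k_lt6 : k < 6) : v k = Ordinal k_lt6.
Proof. by apply: val_inj; rewrite /= inordK. Qed.

Lemma ord6P (P : 'I_6 -> Prop) :
  P (v 0) -> P (v 1) -> P (v 2) -> P (v 3) -> P (v 4) -> P (v 5) -> forall i, P i.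
Proof.
move=> P0 P1 P2 P3 P4 P5 i; rewrite -[i]inord_val.
by case: i => [[|[|[|[|[|[|k]]]]]] //].
Qed.

Lemma sum6 (F : 'I_6 -> nat) :
  \sum_i F i = F (v 0) + F (v 1) + F (v 2) + F (v 3) + F (v 4) + F (v 5).
Proof.
rewrite (eq_bigr (fun i : 'I_6 => F (v i))) => [|i _]; last by rewrite /v inord_val.
rewrite -(big_mkord xpredT (fun i => F (v i))).
by do 6 (rewrite big_ltn //); rewrite big_geq // addn0 !addnA.
Qed.

Definition has_edge (C : {set 'I_6}) : bool := [exists e in H'edges, e \subset C].

Lemma has_edge_of (C : {set 'I_6}) (a b c : 'I_6) :
  [set a; b; c] \in H'edges -> a \in C -> b \in C -> c \in C -> has_edge C.
Proof.
move=> e_abc aC bC cC; apply/existsP; exists [set a; b; c].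
by rewrite e_abc !subUset !sub1set aC bC cC.
Qed.

Lemma H'edge_triple (e : {set 'I_6}) : e \in H'edges ->
  exists a b c, [/\ e = [set a; b; c], a != b, b != c & a != c].
Proof.
rewrite !inE; repeat case/orP; move/eqP->;
by do 3 eexists; split; first reflexivity; rewrite !vE.
Qed.

Lemma has_edge_of_triples (C : {set 'I_6}) :
  [|| [&& v 0 \in C, v 1 \in C & v 2 \in C], [&& v 0 \in C, v 1 \in C & v 3 \in C],
      [&& v 2 \in C, v 3 \in C & v 4 \in C], [&& v 2 \in C, v 3 \in C & v 5 \in C],
      [&& v 4 \in C, v 5 \in C & v 0 \in C], [&& v 4 \in C, v 5 \in C & v 1 \in C],
      [&& v 0 \in C, v 2 \in C & v 4 \in C], [&& v 0 \in C, v 3 \in C & v 5 \in C],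
      [&& v 1 \in C, v 2 \in C & v 5 \in C] | [&& v 1 \in C, v 3 \in C & v 4 \in C]] ->
  has_edge C.
Proof.
repeat case/orP; case/and3P => aC bC cC; apply: has_edge_of aC bC cC;
by rewrite !inE eqxx ?orbT.
Qed.

Lemma edge_free_card (C : {set 'I_6}) : ~~ has_edge C -> #|C| <= 3.
Proof.
rewrite -sum1_card big_mkcond sum6 /=; apply: contraR => big.
apply: has_edge_of_triples; move: big.
by case: (v 0 \in C); case: (v 1 \in C); case: (v 2 \in C);
   case: (v 3 \in C); case: (v 4 \in C); case: (v 5 \in C).
Qed.

(* The ten triples of vertices of H' that are not edges. *)
Definition cotriples : seq {set 'I_6} :=
  [:: [set v 0; v 1; v 4]; [set v 0; v 1; v 5]; [set v 0; v 2; v 3];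
      [set v 0; v 2; v 5]; [set v 0; v 3; v 4]; [set v 1; v 2; v 3];
      [set v 1; v 2; v 4]; [set v 1; v 3; v 5]; [set v 2; v 4; v 5];
      [set v 3; v 4; v 5]].

Lemma cotriple_edge_free (C : {set 'I_6}) : C \in cotriples -> ~~ has_edge C.
Proof.
rewrite !inE; repeat case/orP; move/eqP->; apply/existsP => -[e /andP[]];
by rewrite !inE; repeat case/orP; move/eqP->; rewrite !subUset !sub1set !vE // !inE.
Qed.

Lemma card_cotriple (C : {set 'I_6}) : C \in cotriples -> #|C| = 3.
Proof.
by rewrite !inE -sum1_card; repeat case/orP; move/eqP->; rewrite sum_set3 // !vE.
Qed.

Lemma cotriple_count (i : 'I_6) :
  count (fun C : {set 'I_6} => i \in C) cotriples = 5.
Proof. by move: i; apply: ord6P; rewrite /= !vE // !inE. Qed.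

Lemma sum_over_cotriples (F : 'I_6 -> nat) :
  \sum_(C <- cotriples) \sum_(i in C) F i = 5 * \sum_i F i.
Proof.
under eq_bigr => C _ do rewrite big_mkcond.
rewrite exchange_big big_distrr; apply: eq_bigr => i _ /=.
by rewrite -big_mkcond big_const_seq iter_addn_0 cotriple_count mulnC.
Qed.

(* If all ten non-edges have the same weight n/2, all vertices have weight
   n/6: non-edges sharing two vertices force the third weights to agree. *)
Lemma cotriples_balanced (w : 'I_6 -> nat) (n : nat) :
  {in cotriples, forall C : {set 'I_6}, 2 * \sum_(i in C) w i = n} ->
  forall i, 6 * w i = n.
Proof.
move=> half; have : all (fun C : {set 'I_6} => 2 * \sum_(i in C) w i == n) cotriples.
  by apply/allP => C /half ->.
rewrite /= !sum_set3; try by rewrite !vE.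
by move=> weights; apply: ord6P; lia.
Qed.

Section Blowup.
Variables (T : finType) (f : T -> 'I_6).

Definition part (i : 'I_6) : {set T} := [set x | f x == i].

Lemma card_preimset (C : {set 'I_6}) :
  #|f @^-1: C| = \sum_(i in C) #|part i|.
Proof.
rewrite -sum1_card (partition_big f (mem C)) => [|x]; last by rewrite inE.
apply: eq_bigr => i iC; rewrite -sum1_card; apply: eq_bigl => x.
by rewrite !inE andbC; case: eqP => [->|]; rewrite ?iC ?andbF.
Qed.

Lemma card_blowup : #|T| = \sum_i #|part i|.
Proof.
rewrite -cardsT; have <- : f @^-1: [set: 'I_6] = [set: T].
  by apply/setP=> x; rewrite !inE.
by rewrite card_preimset; apply: eq_bigl => i; rewrite inE.
Qed.

(* A set is contained in the preimage of its image. *)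
Lemma card_le_image_weight (S : {set T}) : #|S| <= \sum_(i in f @: S) #|part i|.
Proof.
rewrite -card_preimset; apply/subset_leq_card/subsetP => x xS.
by rewrite inE imset_f.
Qed.

Lemma coclique_preimset (C : {set 'I_6}) : ~~ has_edge C -> coclique f (f @^-1: C).
Proof.
move=> C_free x y z; rewrite !inE => xC yC zC.
apply/negP => /and4P[_ _ _ e_xyz]; move/negP: C_free; apply.
exact: has_edge_of e_xyz xC yC zC.
Qed.

Lemma coclique_image (S : {set T}) : coclique f S -> ~~ has_edge (f @: S).
Proof.
move=> S_co; apply/existsP => -[e /andP[He /subsetP e_sub]].
have [a [b [c [De ab bc ac]]]] := H'edge_triple He.
have /imsetP[x xS ax] : a \in f @: S by apply: e_sub; rewrite De !inE eqxx.
have /imsetP[y yS b_y] : b \in f @: S by apply: e_sub; rewrite De !inE eqxx ?orbT.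
have /imsetP[z zS cz] : c \in f @: S by apply: e_sub; rewrite De !inE eqxx ?orbT.
move/negP: (S_co x y z xS yS zS); apply.
by rewrite /blowup_edge -ax -b_y -cz ab bc ac -De.
Qed.

Lemma cotriple_total :
  \sum_(C <- cotriples) 2 * #|f @^-1: C| = \sum_(C <- cotriples) #|T|.
Proof.
rewrite -big_distrr /= (eq_bigr _ (fun C _ => card_preimset C)).
rewrite sum_over_cotriples -card_blowup big_const_seq iter_addn_0 count_predT /=.
lia.
Qed.

Lemma cotriple_dichotomy :
  (exists2 C : {set 'I_6}, C \in cotriples & #|T| < 2 * #|f @^-1: C|) \/
  (forall i, 6 * #|part i| = #|T|).
Proof.
case: (boolP (has (fun C : {set 'I_6} => #|T| < 2 * #|f @^-1: C|) cotriples)).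
  by case/hasP => C CC large; left; exists C.
move/hasPn => small; right; apply: cotriples_balanced => C CC.
rewrite -card_preimset.
have equal := @sum_le_all_eq _ cotriples (fun D => 2 * #|f @^-1: D|) (fun _ => #|T|).
apply: equal CC => [D /small|]; first by lia.
by rewrite cotriple_total.
Qed.

Section Balanced.
Hypothesis balanced : forall i, 6 * #|part i| = #|T|.

Lemma balanced_sum (A : {set 'I_6}) : 6 * \sum_(i in A) #|part i| = #|A| * #|T|.
Proof. by rewrite big_distrr /= (eq_bigr _ (fun i _ => balanced i)) sum_nat_const. Qed.

Lemma balanced_cotriple (C : {set 'I_6}) :
  C \in cotriples -> 2 * #|f @^-1: C| = #|T|.
Proof.
move=> CC; have := balanced_sum C.
by rewrite -card_preimset card_cotriple //; lia.
Qed.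

(* A coclique meets at most three classes, each of size n/6. *)
Lemma balanced_coclique_le (S : {set T}) : coclique f S -> 2 * #|S| <= #|T|.
Proof.
move=> S_co.
have S_le : 6 * #|S| <= #|f @: S| * #|T|.
  by rewrite -balanced_sum leq_mul2l card_le_image_weight.
have image_le : #|f @: S| * #|T| <= 3 * #|T|.
  by rewrite leq_mul2r edge_free_card ?orbT // coclique_image.
lia.
Qed.

End Balanced.

Lemma exists_half_cotriple :
  exists2 C : {set 'I_6}, C \in cotriples & #|T| <= 2 * #|f @^-1: C|.
Proof.
case: cotriple_dichotomy => [[C CC /ltnW] | balanced]; first by exists C.
have CC : [set v 0; v 1; v 4] \in cotriples by exact: mem_head.
by exists [set v 0; v 1; v 4]; rewrite // balanced_cotriple.
Qed.

End Blowup.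

Theorem mainTheorem13 (T : finType) (f : T -> 'I_6) :
  (exists S : {set T}, coclique f S /\ #|T| <= 2 * #|S|) /\
  (#|T| %% 6 != 0 -> exists S : {set T}, coclique f S /\ #|T| < 2 * #|S|) /\
  ((forall i : 'I_6, 6 * #|[set x | f x == i]| = #|T|) ->
     (exists S : {set T}, coclique f S /\ 2 * #|S| = #|T|) /\
     (forall S : {set T}, coclique f S -> 2 * #|S| <= #|T|)).
Proof.
have cotriple_coclique C : C \in cotriples -> coclique f (f @^-1: C).
  by move=> CC; apply/coclique_preimset/cotriple_edge_free.
have [C CC half] := exists_half_cotriple f.
split; first by exists (f @^-1: C); split; first exact: cotriple_coclique.
split.
  move=> n_mod6; case: (cotriple_dichotomy f) => [[D DD large] | balanced].
    by exists (f @^-1: D); split; first exact: cotriple_coclique.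
  by rewrite -(balanced (v 0)) mulnC modnMl in n_mod6.
move=> balanced; split; last exact: balanced_coclique_le.
by exists (f @^-1: C); split; [exact: cotriple_coclique | exact: balanced_cotriple].
Qed.
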